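(* Let $m,\ell\in\mathbb N$. There exist $L_2(m,\ell)\in\mathbb N$ and $K_2(m,\ell)\in\mathbb N$ such that the following holds: if $\varepsilon_1,\dots,\varepsilon_m\in\{\pm1\}$ and $i_1,\dots,i_m\ge K_2(m,\ell)$ are integers with $\mathrm{gap}(i_1,\dots,i_m)\le\ell$, then $$\varepsilon_1a_{i_1}+\dots+\varepsilon_ma_{i_m}=0\quad\text{implies}\quad\varepsilon_1\eta^{i_1}+\dots+\varepsilon_m\eta^{i_m}=0,$$ and if $\varepsilon_1a_{i_1}+\dots+\varepsilon_ma_{i_m}\ne0$, then $$|\varepsilon_1a_{i_1}+\dots+\varepsilon_ma_{i_m}|\ge\eta^{\min\{i_1,\dots,i_m\}-L_2(m,\ell)}.$$
   Context: Standing setting: $d\in\mathbb N$; $\lambda_1,\dots,\lambda_d\in\mathbb C$ are the roots of an irreducible polynomial of degree $d$ with integer coefficients; $c_1,\dots,c_d\in\mathbb C$; the dominant root condition holds: $\lambda_1$ is real, $\lambda_1>1$, $\lambda_1>\max\{|\lambda_2|,\dots,|\lambda_d|\}$, $c_1\ne0$; $a_n=c_1\lambda_1^n+\dots+c_d\lambda_d^n$ is a positive integer for every $n\in\mathbb N$; and $\eta:=\lambda_1$. For integers $i_1,\dots,i_m$, let $i_{(1)}\le\dots\le i_{(m)}$ be the same numbers sorted nondecreasingly, and $\mathrm{gap}(i_1,\dots,i_m)=\max\{i_{(2)}-i_{(1)},\dots,i_{(m)}-i_{(m-1)}\}$ (taken to be $0$ if $m=1$). *)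

From HB Require Import structures.
From mathcomp Require Import all_boot all_order all_algebra.
From mathcomp Require Import complex.
From mathcomp Require Import reals.
Set Implicit Arguments. Unset Strict Implicit. Unset Printing Implicit Defensive.
Import Order.TTheory GRing.Theory Num.Theory.

Definition gap (s : seq nat) : nat :=
  let t := sort leq s in
  \max_(k < (size t).-1) (nth 0 t k.+1 - nth 0 t k).

(* min{i_1,...,i_m} (only used for m >= 1; value 0 for the empty sequence). *)
Definition seqmin (s : seq nat) : nat := head 0%N (sort leq s).

Local Open Scope ring_scope.

(* The linear recurrence sequence a_n = c_1 lambda_1^n + ... + c_d lambda_d^n,
   with indices shifted to 0..d-1 (lambda 0 = lambda_1 = eta). *)
Definition lrs (R : rcfType) (d : nat) (c lam : 'I_d -> R[i]) (n : nat) : R[i] :=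
  \sum_(j < d) c j * lam j ^+ n.

From HB Require Import structures.
From mathcomp Require Import all_boot all_order all_algebra.
From mathcomp Require Import complex.
From mathcomp Require Import reals.
From mathcomp Require Import lra zify.
Set Implicit Arguments. Unset Strict Implicit. Unset Printing Implicit Defensive.
Import Order.TTheory GRing.Theory Num.Theory.
Local Open Scope ring_scope.

(** Put i0 = min i_k and e_k = i_k - i0, so that e_k <= m l by the gap condition.
   The sum factors as  S = sum_j c_j lam_j^i0 Q(lam_j)  with  Q(z) = sum_k eps_k z^e_k.
   If Q(eta) = 0, then Q is divisible by the minimal polynomial of eta, whose roots are
   all the lam_j, so S = 0.  Otherwise |Q(eta)| is at least a constant depending only on
   m and l, since only finitely many such Q exist; as eta strictly dominates every other
   |lam_j|, the term c_1 eta^i0 Q(eta) then outweighs twice the others once i0 is large,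
   whence |S| >= eta^(i0 - L). *)

Lemma seqmin_le (s : seq nat) x : x \in s -> (seqmin s <= x)%N.
Proof.
rewrite /seqmin -(mem_sort leq).
case: (sort leq s) (sort_sorted leq_total s) => //= h t st.
rewrite inE => /predU1P [-> //|xt].
by have /allP := order_path_min leq_trans st; apply.
Qed.

Lemma seqmin_mem (s : seq nat) x : x \in s -> seqmin s \in s.
Proof.
rewrite /seqmin -(mem_sort leq) => xs; rewrite -(mem_sort leq).
by case: (sort leq s) xs => //= h t _; exact: mem_head.
Qed.

Lemma le_seqmin_gap (s : seq nat) x :
  x \in s -> (x <= seqmin s + (size s).-1 * gap s)%N.
Proof.
rewrite /seqmin /gap -(mem_sort leq) -(size_sort leq s) /=.
set t := sort leq s; set G := \max_(k < _) _ => xt.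
have nth_le k : (k < size t)%N -> (nth 0 t k <= head 0 t + k * G)%N.
  elim: k => [|k IH] lt_kt; first by rewrite mul0n addn0; case: (t).
  have lt_k : (k < (size t).-1)%N by rewrite -ltnS prednK // (leq_ltn_trans _ lt_kt).
  have : (nth 0 t k.+1 - nth 0 t k <= G)%N := leq_bigmax (Ordinal lt_k).
  have := IH (ltnW lt_kt); lia.
have lt_xt : (index x t < size t)%N by rewrite index_mem.
have := nth_le _ lt_xt; rewrite nth_index //.
have : (index x t <= (size t).-1)%N by rewrite -ltnS prednK // (leq_ltn_trans _ lt_xt).
move=> /leq_mul /(_ (leqnn G)); lia.
Qed.

Lemma bernoulli_ler (R : realDomainType) (q : R) n :
  1 <= q -> 1 + n%:R * (q - 1) <= q ^+ n.
Proof.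
move=> q_ge1; elim: n => [|n IH]; first by rewrite mul0r addr0 expr0.
have : q * (1 + n%:R * (q - 1)) <= q * q ^+ n.
  by rewrite ler_wpM2l // (le_trans ler01).
have : 0 <= n%:R * ((q - 1) * (q - 1)) by rewrite mulr_ge0 ?ler0n ?mulr_ge0 ?subr_ge0.
rewrite exprS -natr1; lra.
Qed.

Lemma exists_expr_ge (R : archiRealFieldType) (q y : R) :
  1 < q -> exists n, y <= q ^+ n.
Proof.
move=> q_gt1; pose n := Num.bound (`|y| / (q - 1)); exists n.
have q1_gt0 : 0 < q - 1 by rewrite subr_gt0.
have := archi_boundP (divr_ge0 (normr_ge0 y) (ltW q1_gt0)).
rewrite -/n ltr_pdivrMr // => lt_yn.
have := bernoulli_ler n (ltW q_gt1); have := ler_norm y; lra.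
Qed.

Lemma eventually_expr_le (R : archiRealFieldType) (y A t e : R) :
  0 < A -> 0 <= t -> t < e ->
  exists K, forall n, (K <= n)%N -> y * t ^+ n <= A * e ^+ n.
Proof.
move=> A_gt0 t_ge0 lt_te; have e_gt0 : 0 < e := le_lt_trans t_ge0 lt_te.
have [->|t_neq0] := eqVneq t 0.
  exists 1%N => -[//|n] _; rewrite expr0n mulr0.
  by rewrite mulr_ge0 ?exprn_ge0 ?ltW.
have t_gt0 : 0 < t by rewrite lt_def t_neq0.
have q_gt1 : 1 < e / t by rewrite ltr_pdivlMr // mul1r.
have [K HK] := exists_expr_ge (y / A) q_gt1.
exists K => n le_Kn; have := le_trans HK (ler_weXn2l (ltW q_gt1) le_Kn).
rewrite expr_div_n ler_pdivlMr ?exprn_gt0 // mulrAC ler_pdivrMr //.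
by rewrite [A * _]mulrC.
Qed.

Lemma complex_eventually_expr_le (R : realType) (y A t e : R[i]) :
  y \is Num.real -> 0 < A -> 0 <= t -> t < e ->
  exists K, forall n, (K <= n)%N -> y * t ^+ n <= A * e ^+ n.
Proof.
move=> y_real A_gt0 t_ge0 lt_te.
have [A_real t_real] := (gtr0_real A_gt0, ger0_real t_ge0).
have e_real : e \is Num.real := gtr0_real (le_lt_trans t_ge0 lt_te).
move: A_gt0 t_ge0 lt_te; case/complex_realP: y_real => y' ->.
case/complex_realP: A_real => A' ->; case/complex_realP: t_real => t' ->.
case/complex_realP: e_real => e' ->; rewrite ltcR ler0c ltcR => A_gt0 t_ge0 lt_te.
have [K HK] := eventually_expr_le y' A_gt0 t_ge0 lt_te.
by exists K => n /HK; rewrite -!rmorphXn -!rmorphM lecR.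
Qed.

Lemma eventually_sum_expr_le (R : realType) (I : finType) (P : pred I)
    (w t : I -> R[i]) (A e : R[i]) :
  0 < A -> 0 < e -> (forall i, P i -> w i \is Num.real) ->
  (forall i, P i -> 0 <= t i < e) ->
  exists K, forall n, (K <= n)%N -> \sum_(i | P i) w i * t i ^+ n <= A * e ^+ n.
Proof.
move=> A_gt0 e_gt0 w_real t_bnd.
have HK i : exists K, P i -> forall n, (K <= n)%N ->
    #|I|.+1%:R * w i * t i ^+ n <= A * e ^+ n.
  have [Pi|_] := boolP (P i); last by exists 0%N.
  have /andP [t_ge0 lt_te] := t_bnd i Pi.
  have N_w_real : #|I|.+1%:R * w i \is Num.real by rewrite rpredM ?realn ?w_real.
  by have [K HK] := complex_eventually_expr_le N_w_real A_gt0 t_ge0 lt_te; exists K.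
have [K HK'] := fin_all_exists HK.
exists (\max_i K i) => n le_Kn.
rewrite -(ler_pM2l (ltr0Sn _ #|I|)) mulr_sumr.
apply: le_trans (_ : \sum_(i | P i) A * e ^+ n <= _).
  apply: ler_sum => i Pi; rewrite mulrA; apply: HK' => //.
  exact: leq_trans (leq_bigmax i) le_Kn.
rewrite sumr_const mulr_natl; apply: ler_wpMn2l.
  by rewrite mulr_ge0 ?exprn_ge0 ?ltW.
exact: leq_trans (max_card _) (leqnSn _).
Qed.

Lemma nonzero_norm_lbound (F : numDomainType) (s : seq F) :
  exists2 r, 0 < r & forall x, x \in s -> x != 0 -> r <= `|x|.
Proof.
elim: s => [|x s [r r_gt0 Hr]]; first by exists 1.
have [->|x_neq0] := eqVneq x 0.
  by exists r => // y; rewrite inE => /predU1P[->|/Hr//]; rewrite eqxx.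
case/orP: (real_leVge (normr_real x) (gtr0_real r_gt0)) => [le_xr|le_rx].
  exists `|x|; first by rewrite normr_gt0.
  by move=> y; rewrite inE => /predU1P[-> //|ys /(Hr _ ys)]; apply: le_trans.
by exists r => // y; rewrite inE => /predU1P[->|/Hr//].
Qed.

Lemma ler_normD_dominant (F : numDomainType) (a x y : F) :
  a <= `|x| -> 2 * `|y| <= a -> a <= 2 * `|x + y|.
Proof.
move=> le_ax le_ya; apply: le_trans (ler_wpM2l (ler0n _ 2) (lerB_normD x y)).
rewrite mulrBr lerBrDr; apply: le_trans (lerD (lexx a) le_ya) _.
by rewrite -mulr2n -(mulr_natl a) ler_pM2l ?ltr0n.
Qed.

Lemma irredp_dvdp_of_root (F L : fieldType) (f : {rmorphism F -> L}) (P Q : {poly F}) x :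
  irreducible_poly P -> root (map_poly f P) x -> root (map_poly f Q) x -> P %| Q.
Proof.
move=> irrP rootP rootQ.
have root_g : root (map_poly f (gcdp P Q)) x by rewrite gcdp_map root_gcd rootP.
have g_nconst : size (gcdp P Q) != 1%N.
  rewrite -(size_map_poly f); apply/eqP => g1.
  have g_neq0 : map_poly f (gcdp P Q) != 0 by rewrite -size_poly_eq0 g1.
  by have := root_size_gt1 g_neq0 root_g; rewrite g1.
by rewrite -(eqp_dvdl Q (irrP.2 _ g_nconst (dvdp_gcdl P Q))) dvdp_gcdr.
Qed.
Definition powsum (F : pzRingType) m (eps : 'I_m -> int) (e : 'I_m -> nat) (z : F) :=
  \sum_(k < m) (eps k)%:~R * z ^+ e k.

Lemma sum_lrs_powsum (R : rcfType) d (c lam : 'I_d -> R[i]) m (eps : 'I_m -> int) idx :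
  \sum_(k < m) (eps k)%:~R * lrs c lam (idx k)
  = \sum_(j < d) c j * powsum eps idx (lam j).
Proof.
rewrite /lrs; under eq_bigr do rewrite mulr_sumr.
rewrite exchange_big /=; apply: eq_bigr => j _; rewrite mulr_sumr.
by apply: eq_bigr => k _; rewrite mulrCA.
Qed.

Lemma powsum_shift (F : comPzRingType) m (eps : 'I_m -> int) idx n (z : F) :
  (forall k, n <= idx k)%N ->
  powsum eps idx z = z ^+ n * powsum eps (fun k => idx k - n)%N z.
Proof.
move=> le_n_idx; rewrite /powsum mulr_sumr; apply: eq_bigr => k _.
by rewrite mulrCA -exprD subnKC.
Qed.

Lemma powsum_horner (F : numFieldType) m (eps : 'I_m -> int) e (z : F) :
  powsum eps e z
  = (map_poly ratr (\sum_(k < m) (eps k)%:~R *: 'X^(e k) : {poly rat})).[z].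
Proof.
rewrite raddf_sum horner_sum; apply: eq_bigr => k _.
by rewrite /= map_polyZ map_polyXn hornerZ hornerXn rmorph_int.
Qed.

Lemma norm_powsum_le (F : numDomainType) m (eps : 'I_m -> int) e (z M : F) D :
  (forall k, eps k = 1 \/ eps k = -1) -> (forall k, (e k <= D)%N) ->
  1 <= M -> `|z| <= M -> `|powsum eps e z| <= m%:R * M ^+ D.
Proof.
move=> Heps le_eD M_ge1 le_zM; apply: le_trans (ler_norm_sum _ _ _) _.
rewrite mulr_natl -[m in _ *+ m]card_ord -sumr_const.
apply: ler_sum => k _; rewrite normrM.
have -> : `|(eps k)%:~R : F| = 1 by case: (Heps k) => ->; rewrite ?normrN normr1.
rewrite normrX mul1r; apply: le_trans (ler_weXn2l M_ge1 (le_eD k)).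
by apply: lerXn2r; rewrite // nnegrE ?normr_ge0 ?(le_trans ler01).
Qed.

Lemma powsum_norm_lbound (F : numDomainType) (z : F) m D :
  exists2 r, 0 < r & forall (eps : 'I_m -> int) (e : 'I_m -> nat),
    (forall k, eps k = 1 \/ eps k = -1) -> (forall k, (e k <= D)%N) ->
    powsum eps e z != 0 -> r <= `|powsum eps e z|.
Proof.
pose f (x : {ffun 'I_m -> bool * 'I_D.+1}) :=
  powsum (fun k => if (x k).1 then 1 else -1) (fun k => val (x k).2) z.
have [r r_gt0 Hr] := nonzero_norm_lbound (codom f).
exists r => // eps e Heps le_eD.
pose x : {ffun 'I_m -> bool * 'I_D.+1} := [ffun k => (eps k == 1, inord (e k))].
have -> : powsum eps e z = f x.
  apply: eq_bigr => k _; rewrite ffunE /= inordK ?ltnS //.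
  by case: (Heps k) => ->.
by apply: Hr; exact: codom_f.
Qed.

Section DominantRoot.
Variables (R : realType) (d : nat) (lam c : 'I_d.+1 -> R[i]) (p : {poly int}).
Hypothesis Hirr : irreducible_poly (map_poly (intr : int -> rat) p).
Hypothesis Hroots : map_poly (intr : int -> R[i]) p
  = (lead_coef p)%:~R *: \prod_(j < d.+1) ('X - (lam j)%:P).
Hypothesis Hgt1 : 1 < lam ord0.
Hypothesis Hdom : forall j : 'I_d.+1, j != ord0 -> `|lam j| < lam ord0.
Hypothesis Hc : c ord0 != 0.

Local Notation eta := (lam ord0).

Lemma root_lam j : root (map_poly ratr (map_poly (intr : int -> rat) p)) (lam j).
Proof.
rewrite -map_poly_comp (eq_map_poly (fun z => rmorph_int _ z)) Hroots.
by rewrite rootE hornerZ horner_prod (bigD1 j) //= hornerXsubC subrr mul0r mulr0.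
Qed.

Lemma powsum_conj m (eps : 'I_m -> int) e j :
  powsum eps e eta = 0 -> powsum eps e (lam j) = 0.
Proof.
rewrite !powsum_horner => /eqP root_eta; apply/eqP.
apply: root_dvdp (root_lam j); rewrite dvdp_map.
exact: irredp_dvdp_of_root Hirr (root_lam ord0) root_eta.
Qed.

Lemma eta_gt0 : 0 < eta.
Proof. exact: lt_trans ltr01 Hgt1. Qed.

Lemma norm_lam_le j : `|lam j| <= eta.
Proof.
have [->|/Hdom/ltW //] := eqVneq j ord0.
by rewrite ger0_norm // ltW // eta_gt0.
Qed.

Lemma lrs_powsum_half_bound m D :
  exists2 A, 0 < A & exists K, forall (eps : 'I_m -> int) e n,
    (forall k, eps k = 1 \/ eps k = -1) -> (forall k, (e k <= D)%N) -> (K <= n)%N ->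
    powsum eps e eta != 0 ->
    A * eta ^+ n <= 2 * `|\sum_j c j * lam j ^+ n * powsum eps e (lam j)|.
Proof.
have [r r_gt0 Hr] := powsum_norm_lbound eta m D.
pose A := `|c ord0| * r; pose B := m%:R * eta ^+ D.
have A_gt0 : 0 < A by rewrite mulr_gt0 ?normr_gt0.
have B_ge0 : 0 <= B by rewrite mulr_ge0 ?ler0n ?exprn_ge0 ?ltW ?eta_gt0.
have w_real j : j != ord0 -> 2 * B * `|c j| \is Num.real.
  by move=> _; apply/ger0_real/mulr_ge0/normr_ge0/mulr_ge0/B_ge0/ler0n.
have t_bnd j : j != ord0 -> 0 <= `|lam j| < eta by move/Hdom ->; rewrite normr_ge0.
have [K HK] := eventually_sum_expr_le A_gt0 eta_gt0 w_real t_bnd.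
exists A => //; exists K => eps e n Heps le_eD le_Kn P0.
rewrite (bigD1 ord0) //=; apply: ler_normD_dominant.
  rewrite !normrM normrX (ger0_norm (ltW eta_gt0)) mulrAC /A.
  by rewrite ler_pM2l ?Hr // mulr_gt0 ?normr_gt0 ?exprn_gt0 ?eta_gt0.
apply: le_trans (HK n le_Kn).
apply: le_trans (ler_wpM2l (ler0n _ 2) (ler_norm_sum _ _ _)) _.
rewrite mulr_sumr; apply: ler_sum => j _; rewrite -!mulrA ler_wpM2l //.
rewrite !normrM normrX mulrA [X in X <= _]mulrC [X in _ <= X]mulrA.
rewrite ler_wpM2r ?mulr_ge0 ?normr_ge0 ?exprn_ge0 //.
exact: norm_powsum_le Heps le_eD (ltW Hgt1) (norm_lam_le j).
Qed.

Lemma lrs_powsum_lower_bound m D :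
  exists L K : nat, forall (eps : 'I_m -> int) e n,
    (forall k, eps k = 1 \/ eps k = -1) -> (forall k, (e k <= D)%N) -> (K <= n)%N ->
    powsum eps e eta != 0 ->
    eta ^ (n%:Z - L%:Z) <= `|\sum_j c j * lam j ^+ n * powsum eps e (lam j)|.
Proof.
have [A A_gt0 [K HK]] := lrs_powsum_half_bound m D.
have [L HL] : exists L, 2 <= A * eta ^+ L.
  have [L HL] := complex_eventually_expr_le (@realn _ 2) A_gt0 ler01 Hgt1.
  by exists L; have := HL L (leqnn L); rewrite expr1n mulr1.
exists L, K => eps e n Heps le_eD le_Kn P0.
have := HK eps e n Heps le_eD le_Kn P0.
have -> : A * eta ^+ n = eta ^ (n%:Z - L%:Z) * (A * eta ^+ L).
  by rewrite mulrCA -[eta ^+ L]/(eta ^ L%:Z) -expfzDr ?gt_eqF ?eta_gt0 // subrK.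
move=> le_S; rewrite -(ler_pM2l (ltr0Sn _ 1)); apply: le_trans le_S.
by rewrite mulrC ler_wpM2l // exprz_ge0 // ltW // eta_gt0.
Qed.

End DominantRoot.

Theorem lemma6p3 (R : realType) (d : nat) (lam c : 'I_d.+1 -> R[i])
  (p : {poly int})
  (Hdeg : size p = d.+2)
  (Hirr : irreducible_poly (map_poly (intr : int -> rat) p))
  (Hroots : map_poly (intr : int -> R[i]) p
            = (lead_coef p)%:~R *: \prod_(j < d.+1) ('X - (lam j)%:P))
  (Hreal : lam ord0 \is Num.real)
  (Hgt1 : 1 < lam ord0)
  (Hdom : forall j : 'I_d.+1, j != ord0 -> `|lam j| < lam ord0)
  (Hc : c ord0 != 0)
  (Hpos : forall n : nat, (0 < n)%N ->
            exists k : nat, (0 < k)%N /\ lrs c lam n = k%:R)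
  (m l : nat) :
  exists L2 K2 : nat,
    forall (eps : 'I_m -> int) (idx : 'I_m -> nat),
      (forall j, eps j = 1 \/ eps j = -1) ->
      (forall j, (K2 <= idx j)%N) ->
      (gap [seq idx j | j <- enum 'I_m] <= l)%N ->
      let S := \sum_(j < m) (eps j)%:~R * lrs c lam (idx j) in
      (S = 0 -> \sum_(j < m) (eps j)%:~R * lam ord0 ^+ idx j = 0) /\
      (S != 0 ->
         lam ord0 ^ ((seqmin [seq idx j | j <- enum 'I_m])%:Z - L2%:Z) <= `|S|).
Proof.
case: m => [|m].
  by exists 0%N, 0%N => eps idx _ _ _ S; rewrite /S !big_ord0 eqxx.
have [L [K HK]] := lrs_powsum_lower_bound Hgt1 Hdom Hc m.+1 (m * l).
exists L, K => eps idx Heps le_K_idx Hgap S.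
set s := [seq idx j | j <- enum 'I_m.+1]; set i0 := seqmin s.
have idx_s k : idx k \in s by rewrite map_f ?mem_enum.
have le_i0_idx k : (i0 <= idx k)%N := seqmin_le (idx_s k).
have le_e k : (idx k - i0 <= m * l)%N.
  have := le_seqmin_gap (idx_s k); rewrite size_map size_enum_ord /= -/i0.
  have := leq_mul (leqnn m) Hgap; rewrite -/s; lia.
have le_K_i0 : (K <= i0)%N.
  by rewrite /i0; have /mapP [j0 _ ->] := seqmin_mem (idx_s ord0).
pose e k := (idx k - i0)%N.
have HS : S = \sum_j c j * lam j ^+ i0 * powsum eps e (lam j).
  rewrite /S sum_lrs_powsum; apply: eq_bigr => j _.
  by rewrite (powsum_shift _ _ le_i0_idx) mulrA.
have [P0|P0] := eqVneq (powsum eps e (lam ord0)) 0.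
  have S0 : S = 0.
    by rewrite HS big1 // => j _; rewrite (powsum_conj Hirr Hroots _ P0) mulr0.
  split=> [_|]; last by rewrite S0 eqxx.
  by rewrite -[LHS]/(powsum eps idx _) (powsum_shift _ _ le_i0_idx) P0 mulr0.
have := HK eps e i0 Heps le_e le_K_i0 P0; rewrite -HS => le_S.
split=> [S0|//].
by have := lt_le_trans (exprz_gt0 _ (eta_gt0 Hgt1)) le_S; rewrite S0 normr0 ltxx.
Qed.
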